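(* For every finite set $\Omega$ with $|\Omega|\ge2$ and every $\varepsilon>0$ there exist $\delta>0$ and $n_0>0$ such that for all $n>n_0$ and all $\mu,\mu',\nu,\nu'\in\mathcal P(\Omega^n)$: if $D_\square(\mu,\mu')+D_\square(\nu,\nu')<\delta$, then $D_\square(\mu\otimes\nu,\mu'\otimes\nu')<\varepsilon$, where the product measures are regarded as elements of $\mathcal P((\Omega\times\Omega)^n)$ and the cut metric on the left is taken with spin set $\Omega\times\Omega$.
   Context: $\mathcal P(\mathcal X)$ denotes the set of probability measures on a finite set $\mathcal X$; $[n]=\{1,\dots,n\}$. For $\mu,\nu\in\mathcal P(\Omega^n)$, $\mu\otimes\nu$ is the law of $(\sigma,\tau)$ with $\sigma\sim\mu,\tau\sim\nu$ independent, identified with the configuration $((\sigma_1,\tau_1),\dots,(\sigma_n,\tau_n))\in(\Omega\times\Omega)^n$. For a finite spin set $\Omega$ and $\mu,\nu\in\mathcal P(\Omega^n)$ let $\Gamma(\mu,\nu)$ be the set of couplings, i.e. probability measures $\gamma$ on $\Omega^n\times\Omega^n$ whose first and second marginals are $\mu$ and $\nu$. The cut metric is $D_\square(\mu,\nu)=\frac1n\min_{\gamma\in\Gamma(\mu,\nu)}\max_{I\subset[n],\,B\subset\Omega^n\times\Omega^n,\,\omega\in\Omega}\Big|\sum_{i\in I}\sum_{(\sigma,\tau)\in B}\gamma(\sigma,\tau)\big(\mathbf 1\{\sigma_i=\omega\}-\mathbf 1\{\tau_i=\omega\}\big)\Big|$. *)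

From mathcomp Require Import all_boot.
From Stdlib Require Import Reals ClassicalEpsilon.

Set Implicit Arguments.
Unset Strict Implicit.
Unset Printing Implicit Defensive.

Definition config (Om : finType) (n : nat) : finType := {ffun 'I_n -> Om}.

Definition meas (X : finType) := {ffun X -> R}.

Definition rsum (X : finType) (f : X -> R) : R := \big[Rplus/0%R]_(x : X) f x.

Definition is_prob (X : finType) (mu : meas X) : Prop :=
  (forall x, (0 <= mu x)%R) /\ rsum (fun x => mu x) = 1%R.

Definition is_coupling (Om : finType) (n : nat)
  (mu nu : meas (config Om n)) (g : meas (prod (config Om n) (config Om n))) : Prop :=
  (forall st, (0 <= g st)%R) /\
  (forall s, rsum (fun t => g (s, t)) = mu s) /\
  (forall t, rsum (fun s => g (s, t)) = nu t).

Definition ind (b : bool) : R := if b then 1%R else 0%R.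

Definition cut_val (Om : finType) (n : nat)
  (g : meas (prod (config Om n) (config Om n))) : R :=
  \big[Rmax/0%R]_(I : {set 'I_n})
   \big[Rmax/0%R]_(B : {set prod (config Om n) (config Om n)})
    \big[Rmax/0%R]_(w : Om)
      Rabs (\big[Rplus/0%R]_(i in I) \big[Rplus/0%R]_(st in B)
              (g st * (ind ((st.1 i) == w) - ind ((st.2 i) == w)))%R).

Definition is_min_cut (Om : finType) (n : nat) (mu nu : meas (config Om n)) (m : R) : Prop :=
  (exists g, is_coupling mu nu g /\ cut_val g = m) /\
  (forall g, is_coupling mu nu g -> (m <= cut_val g)%R).

(* Cut metric D_square(mu, nu) = (1/n) min_{gamma} max_{I,B,omega} |...| *)
Definition D_cut (Om : finType) (n : nat) (mu nu : meas (config Om n)) : R :=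
  (/ INR n * epsilon (inhabits 0%R) (is_min_cut mu nu))%R.

Definition prod_meas (Om : finType) (n : nat) (mu nu : meas (config Om n))
  : meas (config (prod Om Om) n) :=
  [ffun x : config (prod Om Om) n =>
     (mu [ffun i => (x i).1] * nu [ffun i => (x i).2])%R].

(* Optimal couplings g1 of (mu, mu') and g2 of (nu, nu'), combined coordinatewise, give a
   coupling g1 (x) g2 of (mu (x) nu, mu' (x) nu').  For a test (I, B, (a, b)) on it, the indicator
   difference at a coordinate i splits as
     1{s_i = a} 1{t_i = b} - 1{s'_i = a} 1{t'_i = b}
       = (1{s_i = a} - 1{s'_i = a}) 1{t_i = b} + 1{s'_i = a} (1{t_i = b} - 1{t'_i = b}).
   Once the (t, t') component is fixed, the first part is a cut sum of g1 for a smaller index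
   set and test set, hence bounded by cut_val g1; symmetrically for the second part.
   Averaging, cut_val (g1 (x) g2) <= cut_val g1 + cut_val g2.  The minimum defining D exists because cut_val is continuous
   and the couplings form a compact set. *)

From mathcomp Require Import all_boot.
From Stdlib Require Import Reals ClassicalEpsilon.
From mathcomp Require Import all_algebra.
From mathcomp Require Import boolp classical_sets topology normedtype derive.
From mathcomp Require Import Rstruct Rstruct_topology.
Import ArrowAsProduct.

Set Implicit Arguments.
Unset Strict Implicit.
Unset Printing Implicit Defensive.

Local Open Scope R_scope.

Lemma le_bigRmax (X : finType) (F : X -> R) x : F x <= \big[Rmax/0]_y F y.
Proof.
elim: (index_enum X) (mem_index_enum x) => [|y r IH] //.
rewrite big_cons inE => /orP[/eqP <-|/IH hr]; first exact: Rmax_l.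
exact: Rle_trans hr (Rmax_r _ _).
Qed.

Lemma bigRmax_le (X : finType) (F : X -> R) c :
  0 <= c -> (forall x, F x <= c) -> \big[Rmax/0]_x F x <= c.
Proof. by move=> c0 hF; elim/big_ind: _ => // u v; exact: Rmax_lub. Qed.

Lemma bigRmax_ge0 (X : finType) (F : X -> R) :
  (forall x, 0 <= F x) -> 0 <= \big[Rmax/0]_x F x.
Proof.
move=> hF; elim/big_ind: _ => //; first exact: Rle_refl.
by move=> u v hu _; exact: Rle_trans hu (Rmax_l _ _).
Qed.

Lemma big_Rplus_ge0 (X : finType) (P : pred X) (F : X -> R) :
  (forall x, 0 <= F x) -> 0 <= \big[Rplus/0]_(x | P x) F x.
Proof.
move=> hF; elim/big_ind: _ => //; first exact: Rle_refl.
by move=> u v; exact: Rplus_le_le_0_compat.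
Qed.

Lemma le_big_Rplus (X : finType) (F : X -> R) x :
  (forall y, 0 <= F y) -> F x <= \big[Rplus/0]_y F y.
Proof.
move=> hF; rewrite (bigD1 x) //= -{1}[F x]Rplus_0_r.
by apply: Rplus_le_compat_l; exact: big_Rplus_ge0.
Qed.

Lemma inv_INR_ge0 n : 0 <= / INR n.
Proof.
case: n => [|m]; first by rewrite Rinv_0; exact: Rle_refl.
exact/Rlt_le/Rinv_0_lt_compat/lt_0_INR/ltP.
Qed.

Lemma ind_and (u v : bool) : ind (u && v) = ind u * ind v.
Proof. by case: u; case: v; rewrite /ind /=; ring. Qed.

Lemma big_in_ind (X : finType) (A : {set X}) (F : X -> R) :
  \big[Rplus/0]_(x in A) F x = \big[Rplus/0]_x (ind (x \in A) * F x).
Proof. by rewrite big_mkcond; apply: eq_bigr => x _; case: (x \in A); rewrite /ind; ring. Qed.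

Lemma Rabs_weighted_sum_le (X : finType) (w E : X -> R) c :
  (forall x, 0 <= w x) -> (forall x, Rabs (E x) <= c) ->
  Rabs (\big[Rplus/0]_x (w x * E x)) <= (\big[Rplus/0]_x w x) * c.
Proof.
move=> w0 hE; rewrite big_distrl; elim/big_ind2: _ => //.
- by rewrite Rabs_R0; exact: Rle_refl.
- by move=> u1 u2 v1 v2 h1 h2; exact: Rle_trans (Rabs_triang _ _) (Rplus_le_compat _ _ _ _ h1 h2).
- move=> x _; rewrite Rabs_mult (Rabs_pos_eq _ (w0 x)).
  exact: Rmult_le_compat_l (w0 x) (hE x).
Qed.

Section Couplings.
Variables (Om : finType) (n : nat).
Local Notation C := (config Om n).

Definition cut_sum (g : meas (C * C)%type) (I : {set 'I_n}) (B : {set (C * C)%type}) (w : Om) : R :=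
  \big[Rplus/0]_(i in I) \big[Rplus/0]_(st in B)
    (g st * (ind (st.1 i == w) - ind (st.2 i == w))).

Lemma cut_sum_le_cut_val (g : meas (C * C)%type) I B w : Rabs (cut_sum g I B w) <= cut_val g.
Proof.
apply: Rle_trans (le_bigRmax _ I); apply: Rle_trans (le_bigRmax _ B).
exact: (le_bigRmax (fun w => Rabs (cut_sum g I B w))).
Qed.

Lemma cut_val_ge0 (g : meas (C * C)%type) : 0 <= cut_val g.
Proof. by do 3![apply: bigRmax_ge0 => ?]; exact: Rabs_pos. Qed.

Lemma coupling_mass (mu nu : meas C) (g : meas (C * C)%type) :
  is_coupling mu nu g -> is_prob mu -> \big[Rplus/0]_st g st = 1.
Proof.
move=> [_ [g_mu _]] [_ <-]; rewrite /rsum -(eq_bigr _ (fun s _ => g_mu s)).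
by rewrite pair_big; apply: eq_bigr => -[].
Qed.

Lemma independent_coupling (mu nu : meas C) :
  is_prob mu -> is_prob nu -> is_coupling mu nu [ffun st => mu st.1 * nu st.2].
Proof.
move=> [mu0 mu1] [nu0 nu1]; split; [|split].
- by move=> st; rewrite ffunE; exact: Rmult_le_pos.
- move=> s; rewrite /rsum (eq_bigr (fun t => mu s * nu t)) => [|t _]; last by rewrite ffunE.
  by rewrite -big_distrr /=; move: nu1; rewrite /rsum => ->; ring.
- move=> t; rewrite /rsum (eq_bigr (fun s => mu s * nu t)) => [|s _]; last by rewrite ffunE.
  by rewrite -big_distrl /=; move: mu1; rewrite /rsum => ->; ring.
Qed.

End Couplings.

Section ContinuousReal.
Variable T : topologicalType.
Implicit Types f g : T -> R.

Lemma continuous_Rplus f g : continuous f -> continuous g ->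
  continuous (fun x => f x + g x).
Proof. by move=> cf cg x; exact: (@continuousD R R^o T f g x (cf x) (cg x)). Qed.

Lemma continuous_Rmult f g : continuous f -> continuous g ->
  continuous (fun x => f x * g x).
Proof. by move=> cf cg x; exact: (@continuousM R T f g x (cf x) (cg x)). Qed.

Lemma continuous_Rmax f g : continuous f -> continuous g ->
  continuous (fun x => Rmax (f x) (g x)).
Proof.
move=> cf cg x; rewrite (_ : (fun x => _) = (fun y => Num.max (f y) (g y))); last first.
  by apply: funext => y; rewrite RmaxE.
by have := @continuous_max _ T f g x (cf x) (cg x).
Qed.

Lemma continuous_Rabs f : continuous f -> continuous (fun x => Rabs (f x)).
Proof.
move=> cf x; rewrite (_ : (fun x => _) = (fun x => `|f x|%R)); last first.
  by apply: funext => y; rewrite RabsE.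
by apply: continuous_comp; [exact: cf | exact: (@norm_continuous R R^o)].
Qed.

Lemma continuous_bigop (op : R -> R -> R) (x0 : R) :
  (forall f g, continuous f -> continuous g -> continuous (fun x => op (f x) (g x))) ->
  forall (I : Type) (r : seq I) (P : pred I) (F : I -> T -> R),
  (forall i, continuous (F i)) -> continuous (fun x => \big[op/x0]_(i <- r | P i) F i x).
Proof.
move=> c_op I r P F cF; elim: r => [|i r IH].
  rewrite (_ : (fun x => _) = (fun _ => x0)); first by move=> x; exact: cvg_cst.
  by apply: funext => x; rewrite big_nil.
rewrite (_ : (fun x => _) = (fun x => if P i then op (F i x) (\big[op/x0]_(j <- r | P j) F j x)
                                      else \big[op/x0]_(j <- r | P j) F j x)); last first.
  by apply: funext => x; rewrite big_cons.
by case: (P i) => //; exact: c_op.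
Qed.
End ContinuousReal.

Section OptimalCoupling.
Variables (Om : finType) (n : nat) (mu nu : meas (config Om n)).
Local Notation K := (config Om n * config Om n)%type.
Local Open Scope classical_set_scope.

Lemma cut_val_continuous : continuous (fun g : K -> R => cut_val (finfun g : meas K)).
Proof.
do 3![apply: continuous_bigop => [|?]; first exact: continuous_Rmax].
apply: continuous_Rabs.
apply: continuous_bigop => [|i]; first exact: continuous_Rplus.
apply: continuous_bigop => [|st]; first exact: continuous_Rplus.
apply: continuous_Rmult; last by move=> g; exact: cvg_cst.
rewrite (_ : (fun g => _) = (fun g : K -> R => g st)); first exact: proj_continuous.
by apply: funext => g; rewrite ffunE.
Qed.

Definition couplings : set (K -> R) := [set g | is_coupling mu nu (finfun g)].

Lemma couplings_closed : closed couplings.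
Proof.
have -> : couplings =
     \bigcap_(k in setT) ((fun g : K -> R => g k) @^-1` [set x | (0 <= x)%R])
  `&` \bigcap_(s in setT) ((fun g : K -> R => rsum (fun t => g (s, t))) @^-1` [set mu s])
  `&` \bigcap_(t in setT) ((fun g : K -> R => rsum (fun s => g (s, t))) @^-1` [set nu t]).
  apply/seteqP; split => g.
    move=> [g0 [g_mu g_nu]]; split; [split|].
    - by move=> k _ /=; apply/RleP; have := g0 k; rewrite ffunE.
    - by move=> s _ /=; rewrite -g_mu; apply: eq_bigr => t _; rewrite ffunE.
    - by move=> t _ /=; rewrite -g_nu; apply: eq_bigr => s _; rewrite ffunE.
  move=> [[g0 g_mu] g_nu]; split; [|split].
  - by move=> k; rewrite ffunE; apply/RleP; exact: g0.
  - by move=> s; rewrite -(g_mu s I); apply: eq_bigr => t _; rewrite ffunE.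
  - by move=> t; rewrite -(g_nu t I); apply: eq_bigr => s _; rewrite ffunE.
apply: closedI; first apply: closedI.
- apply: closed_bigI => k _; apply: preimage_closed; last exact: closed_ge.
  by move=> g _; exact: proj_continuous.
- apply: closed_bigI => s _; apply: preimage_closed; last exact: closed_eq.
  move=> g _; apply: continuous_bigop => [|t]; [exact: continuous_Rplus | exact: proj_continuous].
- apply: closed_bigI => t _; apply: preimage_closed; last exact: closed_eq.
  move=> g _; apply: continuous_bigop => [|s]; [exact: continuous_Rplus | exact: proj_continuous].
Qed.

Lemma couplings_compact : compact couplings.
Proof.
pose M := rsum (fun s => mu s).
have box : couplings `<=` [set g : K -> R | forall k, `[0%R, M]%classic (g k)].
  move=> g [g0 [g_mu _]] [s t] /=.
  have mu0 s' : 0 <= mu s' by rewrite -g_mu; exact: big_Rplus_ge0.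
  rewrite in_itv /=; apply/andP; split; apply/RleP; first by have := g0 (s, t); rewrite ffunE.
  apply: Rle_trans (_ : mu s <= M); last exact: le_big_Rplus.
  rewrite -g_mu; have := le_big_Rplus (F := fun t' => (finfun g : meas K) (s, t')) t.
  by rewrite ffunE; apply=> t'; exact: g0.
apply: subclosed_compact couplings_closed _ box.
have segment : compact (`[0%R, M]%classic : set R) by exact: segment_compact.
by have := @tychonoff K (fun _ => R) (fun _ => `[0%R, M]%classic) (fun _ => segment).
Qed.

Lemma min_cut_exists : (exists g, is_coupling mu nu g) -> exists m, is_min_cut mu nu m.
Proof.
move=> [g g_coupl].
have ffun_id (h : meas K) : finfun (fun k => h k) = h by apply/ffunP => k; rewrite ffunE.
have couplings_ne : couplings !=set0 by exists (fun k => g k); rewrite /couplings /= ffun_id.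
have [c c_coupl c_min] := compact_EVT_min couplings_ne couplings_compact
  (continuous_subspaceT cut_val_continuous).
exists (cut_val (finfun c : meas K)); split.
  by exists (finfun c : meas K); split => //; move: c_coupl; rewrite inE.
move=> h h_coupl; apply/RleP; have := c_min (fun k => h k); rewrite ffun_id; apply.
by rewrite inE /couplings /= ffun_id.
Qed.
End OptimalCoupling.

Section TensorCoupling.
Variables (Om : finType) (n : nat).
Local Notation C := (config Om n).
Local Notation P := (config (Om * Om)%type n).

Definition cfg_zip (x y : C) : P := [ffun i => (x i, y i)].
Definition cfg_fst (z : P) : C := [ffun i => (z i).1].
Definition cfg_snd (z : P) : C := [ffun i => (z i).2].

Lemma cfg_fst_zip x y : cfg_fst (cfg_zip x y) = x.
Proof. by apply/ffunP => i; rewrite !ffunE. Qed.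

Lemma cfg_snd_zip x y : cfg_snd (cfg_zip x y) = y.
Proof. by apply/ffunP => i; rewrite !ffunE. Qed.

Lemma cfg_zip_unzip z : cfg_zip (cfg_fst z) (cfg_snd z) = z.
Proof. by apply/ffunP => i; rewrite !ffunE; case: (z i). Qed.

Lemma sum_cfg_zip (F : P -> R) :
  \big[Rplus/0]_z F z = \big[Rplus/0]_x \big[Rplus/0]_y F (cfg_zip x y).
Proof.
rewrite pair_big /= (reindex (fun xy : C * C => cfg_zip xy.1 xy.2)) //.
apply: onW_bij; exists (fun z => (cfg_fst z, cfg_snd z)) => [[x y]|z] /=.
  by rewrite cfg_fst_zip cfg_snd_zip.
by rewrite cfg_zip_unzip.
Qed.

Definition zip_pairs (p1 p2 : (C * C)%type) : (P * P)%type :=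
  (cfg_zip p1.1 p2.1, cfg_zip p1.2 p2.2).

Lemma sum_zip_pairs (F : (P * P)%type -> R) :
  \big[Rplus/0]_st F st = \big[Rplus/0]_p1 \big[Rplus/0]_p2 F (zip_pairs p1 p2).
Proof.
rewrite pair_big /= (reindex (fun q : (C * C) * (C * C) => zip_pairs q.1 q.2)) //.
apply: onW_bij; exists (fun st => ((cfg_fst st.1, cfg_fst st.2), (cfg_snd st.1, cfg_snd st.2))).
  by case=> [[x1 y1] [x2 y2]]; rewrite /zip_pairs /= !cfg_fst_zip !cfg_snd_zip.
by case=> z1 z2; rewrite /zip_pairs /= !cfg_zip_unzip.
Qed.

Definition tensor_coupling (g1 g2 : meas (C * C)%type) : meas (P * P)%type :=
  [ffun st => g1 (cfg_fst st.1, cfg_fst st.2) * g2 (cfg_snd st.1, cfg_snd st.2)].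

Lemma tensor_coupling_zip g1 g2 p1 p2 :
  tensor_coupling g1 g2 (zip_pairs p1 p2) = g1 p1 * g2 p2.
Proof. by case: p1 p2 => [x1 y1] [x2 y2]; rewrite ffunE /= !cfg_fst_zip !cfg_snd_zip. Qed.

Lemma tensor_couplingP (mu mu' nu nu' : meas C) g1 g2 :
  is_coupling mu mu' g1 -> is_coupling nu nu' g2 ->
  is_coupling (prod_meas mu nu) (prod_meas mu' nu') (tensor_coupling g1 g2).
Proof.
move=> [g1_0 [g1_mu g1_mu']] [g2_0 [g2_nu g2_nu']]; split; [|split].
- by move=> st; rewrite ffunE; exact: Rmult_le_pos.
- move=> z; rewrite /rsum sum_cfg_zip ffunE -g1_mu -g2_nu big_distrlr /=.
  by do 2!apply: eq_bigr => ? _; rewrite ffunE /= cfg_fst_zip cfg_snd_zip.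
- move=> z; rewrite /rsum sum_cfg_zip ffunE -g1_mu' -g2_nu' big_distrlr /=.
  by do 2!apply: eq_bigr => ? _; rewrite ffunE /= cfg_fst_zip cfg_snd_zip.
Qed.

Section CutSumTensor.
Variables (g1 g2 : meas (C * C)%type) (I : {set 'I_n}) (B : {set (P * P)%type}) (a b : Om).

Let triple (F : 'I_n -> (C * C)%type -> (C * C)%type -> R) : R :=
  \big[Rplus/0]_i \big[Rplus/0]_p1 \big[Rplus/0]_p2
    (ind (i \in I) * ind (zip_pairs p1 p2 \in B) * g1 p1 * g2 p2 * F i p1 p2).

Let triple_add F G H : (forall i p1 p2, F i p1 p2 + G i p1 p2 = H i p1 p2) ->
  triple F + triple G = triple H.
Proof.
move=> FGH; rewrite -big_split; apply: eq_bigr => i _; rewrite -big_split.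
apply: eq_bigr => p1 _; rewrite -big_split; apply: eq_bigr => p2 _ /=.
by rewrite -FGH; ring.
Qed.

Let cut_sum_tensor_triple :
  cut_sum (tensor_coupling g1 g2) I B (a, b) =
  triple (fun i p1 p2 => ind (p1.1 i == a) * ind (p2.1 i == b)
                         - ind (p1.2 i == a) * ind (p2.2 i == b)).
Proof.
rewrite /cut_sum big_in_ind; apply: eq_bigr => i _.
rewrite big_in_ind sum_zip_pairs big_distrr; apply: eq_bigr => p1 _.
rewrite big_distrr; apply: eq_bigr => p2 _.
rewrite tensor_coupling_zip; case: p1 p2 => [x1 y1] [x2 y2].
by rewrite /zip_pairs /= !ffunE !xpair_eqE !ind_and /=; ring.
Qed.

Let weighted_cut_sum_fst :
  \big[Rplus/0]_p2
    (g2 p2 * cut_sum g1 [set i in I | p2.1 i == b] [set p1 | zip_pairs p1 p2 \in B] a)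
  = triple (fun i p1 p2 => (ind (p1.1 i == a) - ind (p1.2 i == a)) * ind (p2.1 i == b)).
Proof.
transitivity (\big[Rplus/0]_p2 \big[Rplus/0]_i \big[Rplus/0]_p1
  (ind (i \in I) * ind (zip_pairs p1 p2 \in B) * g1 p1 * g2 p2 *
   ((ind (p1.1 i == a) - ind (p1.2 i == a)) * ind (p2.1 i == b)))).
  apply: eq_bigr => p2 _; rewrite /cut_sum big_in_ind big_distrr; apply: eq_bigr => i _.
  rewrite big_in_ind !big_distrr; apply: eq_bigr => p1 _.
  by rewrite !inE ind_and /=; ring.
by rewrite exchange_big; apply: eq_bigr => i _; exact: exchange_big.
Qed.

Let weighted_cut_sum_snd :
  \big[Rplus/0]_p1
    (g1 p1 * cut_sum g2 [set i in I | p1.2 i == a] [set p2 | zip_pairs p1 p2 \in B] b)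
  = triple (fun i p1 p2 => ind (p1.2 i == a) * (ind (p2.1 i == b) - ind (p2.2 i == b))).
Proof.
transitivity (\big[Rplus/0]_p1 \big[Rplus/0]_i \big[Rplus/0]_p2
  (ind (i \in I) * ind (zip_pairs p1 p2 \in B) * g1 p1 * g2 p2 *
   (ind (p1.2 i == a) * (ind (p2.1 i == b) - ind (p2.2 i == b))))).
  apply: eq_bigr => p1 _; rewrite /cut_sum big_in_ind big_distrr; apply: eq_bigr => i _.
  rewrite big_in_ind !big_distrr; apply: eq_bigr => p2 _.
  by rewrite !inE ind_and /=; ring.
exact: exchange_big.
Qed.

Lemma cut_sum_tensor :
  cut_sum (tensor_coupling g1 g2) I B (a, b) =
    \big[Rplus/0]_p2
      (g2 p2 * cut_sum g1 [set i in I | p2.1 i == b] [set p1 | zip_pairs p1 p2 \in B] a)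
  + \big[Rplus/0]_p1
      (g1 p1 * cut_sum g2 [set i in I | p1.2 i == a] [set p2 | zip_pairs p1 p2 \in B] b).
Proof.
rewrite cut_sum_tensor_triple weighted_cut_sum_fst weighted_cut_sum_snd.
by symmetry; apply: triple_add => i p1 p2; ring.
Qed.
End CutSumTensor.

Lemma cut_val_tensor_le (g1 g2 : meas (C * C)%type) :
  (forall p, 0 <= g1 p) -> (forall p, 0 <= g2 p) ->
  \big[Rplus/0]_p g1 p = 1 -> \big[Rplus/0]_p g2 p = 1 ->
  cut_val (tensor_coupling g1 g2) <= cut_val g1 + cut_val g2.
Proof.
move=> g1_0 g2_0 g1_1 g2_1.
have cut_val12_ge0 := Rplus_le_le_0_compat _ _ (cut_val_ge0 g1) (cut_val_ge0 g2).
apply: bigRmax_le => // I; apply: bigRmax_le => // B; apply: bigRmax_le => // -[a b].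
rewrite -/(cut_sum _ I B (a, b)) cut_sum_tensor.
apply: Rle_trans (Rabs_triang _ _) (Rplus_le_compat _ _ _ _ _ _).
- rewrite -[cut_val g1]Rmult_1_l -g2_1.
  by apply: Rabs_weighted_sum_le => // p2; exact: cut_sum_le_cut_val.
- rewrite -[cut_val g2]Rmult_1_l -g1_1.
  by apply: Rabs_weighted_sum_le => // p1; exact: cut_sum_le_cut_val.
Qed.

End TensorCoupling.

Section CutDistance.
Variables (Om : finType) (n : nat) (mu nu : meas (config Om n)).

Let min_cut_spec : (exists g, is_coupling mu nu g) ->
  is_min_cut mu nu (epsilon (inhabits 0) (is_min_cut mu nu)).
Proof. by move=> /min_cut_exists [m m_min]; exact: epsilon_spec (ex_intro _ m m_min). Qed.

Lemma D_cut_le_cut_val g : is_coupling mu nu g -> D_cut mu nu <= / INR n * cut_val g.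
Proof.
move=> g_coupl; have [_ m_le] := min_cut_spec (ex_intro _ g g_coupl).
exact: Rmult_le_compat_l (inv_INR_ge0 n) (m_le g g_coupl).
Qed.

Lemma D_cut_attained : (exists g, is_coupling mu nu g) ->
  exists g, is_coupling mu nu g /\ D_cut mu nu = / INR n * cut_val g.
Proof. by rewrite /D_cut => /min_cut_spec [[g [g_coupl <-]] _]; exists g. Qed.
End CutDistance.


(* [all_algebra] rebinds [%R] to [ring_scope], whereas the statement means Stdlib's [R_scope]. *)
Local Close Scope R_scope.
Delimit Scope R_scope with R.

Theorem lemma2p11 (Om : finType) (hOm : (1 < #|Om|)%N) (eps : R) (heps : (0 < eps)%R) :
  exists (delta : R) (n0 : nat), (0 < delta)%R /\ (0 < n0)%N /\
    forall (n : nat), (n0 < n)%N ->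
    forall mu mu' nu nu' : meas (config Om n),
      is_prob mu -> is_prob mu' -> is_prob nu -> is_prob nu' ->
      (D_cut mu mu' + D_cut nu nu' < delta)%R ->
      (D_cut (prod_meas mu nu) (prod_meas mu' nu') < eps)%R.
Proof.
exists eps, 1%N; split=> //; split=> // n _ mu mu' nu nu' mu_p mu'_p nu_p nu'_p D_lt.
have [g1 [g1_coupl D1]] := D_cut_attained (ex_intro _ _ (independent_coupling mu_p mu'_p)).
have [g2 [g2_coupl D2]] := D_cut_attained (ex_intro _ _ (independent_coupling nu_p nu'_p)).
apply: Rle_lt_trans (D_cut_le_cut_val (tensor_couplingP g1_coupl g2_coupl)) _.
apply: Rle_lt_trans D_lt; rewrite D1 D2 -Rmult_plus_distr_l.
apply: Rmult_le_compat_l (inv_INR_ge0 n) (cut_val_tensor_le _ _ _ _).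
- exact: g1_coupl.1.
- exact: g2_coupl.1.
- exact: coupling_mass g1_coupl mu_p.
- exact: coupling_mass g2_coupl nu_p.
Qed.
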